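(* Let $L:\mathbb{T}^d\times\mathbb{R}^d\to\mathbb{R}$ be continuous and satisfy $\lim_{|v|\to\infty}\inf_{x\in\mathbb{T}^d}L(x,v)/|v|=+\infty$, and let $\varphi:\mathbb{T}^d\to\mathbb{R}$ be Lipschitz continuous. For each $\varkappa>0$ and $x\in\mathbb{T}^d$ let $b_\varkappa[x]$, $p_\varkappa[x]$ be as in the context and choose \[\mathbbm{v}_\varkappa[x]\in\operatorname{Argmax}_{v\in\mathbb{R}^d}\big[-p_\varkappa[x]v-L(x+b_\varkappa[x],v)\big].\] Then there exists a constant $C_3$ such that $|\mathbbm{v}_\varkappa[x]|\le C_3$ for all $\varkappa>0$ and $x\in\mathbb{T}^d$.
   Context: $\mathbb{T}^d=\mathbb{R}^d/\mathbb{Z}^d$; $x+v$ is the translate of $x\in\mathbb{T}^d$ by $v\in\mathbb{R}^d$. $\varphi_\varkappa(x)=\inf\{\varphi(x+v)+\frac{1}{2\varkappa^2}|v|^2: v\in\mathbb{R}^d\}$; $b_\varkappa[x]\in\mathbb{R}^d$ is a chosen vector with $\varphi(x+b_\varkappa[x])+\frac{1}{2\varkappa^2}|b_\varkappa[x]|^2=\varphi_\varkappa(x)$, and $p_\varkappa[x]=\frac{1}{\varkappa^2}(-b_\varkappa[x])^\top$ (a row vector). *)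

From HB Require Import structures.
From mathcomp Require Import all_boot all_order all_algebra.
From mathcomp Require Import all_classical all_reals all_analysis.
Set Implicit Arguments. Unset Strict Implicit. Unset Printing Implicit Defensive.
Import Order.TTheory GRing.Theory Num.Theory numFieldNormedType.Exports.
Local Open Scope classical_set_scope.
Local Open Scope ring_scope.

(* Euclidean norm |v| on R^d (the library norm on 'rV is the max norm). *)
Definition enorm {R : realType} {d : nat} (v : 'rV[R]_d) : R :=
  Num.sqrt (\sum_(i < d) v ord0 i ^+ 2).

Definition dotp {R : realType} {d : nat} (p v : 'rV[R]_d) : R :=
  \sum_(i < d) p ord0 i * v ord0 i.

Definition zvec {R : realType} {d : nat} (k : 'rV[int]_d) : 'rV[R]_d :=
  map_mx (fun z : int => z%:~R) k.

(* Functions on T^d = R^d / Z^d are represented as Z^d-Zd_periodic functions on R^d. *)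
Definition Zd_periodic {R : realType} {d : nat} {T : Type} (f : 'rV[R]_d -> T) :=
  forall (x : 'rV[R]_d) (k : 'rV[int]_d), f (x + zvec k) = f x.

Definition eucl_lipschitz {R : realType} {d : nat} (f : 'rV[R]_d -> R) :=
  exists K : R, forall x y, `|f x - f y| <= K * enorm (x - y).

Definition phi_kappa {R : realType} {d : nat} (phi : 'rV[R]_d -> R) (kappa : R)
  (x : 'rV[R]_d) : R :=
  inf [set phi (x + v) + (enorm v) ^+ 2 / (2 * kappa ^+ 2) | v in [set: 'rV[R]_d]].

Definition p_kappa {R : realType} {d : nat} (b : 'rV[R]_d) (kappa : R) : 'rV[R]_d :=
  kappa ^- 2 *: (- b).

Definition Argmax {R : realType} {d : nat} (f : 'rV[R]_d -> R) : set 'rV[R]_d :=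
  [set v | forall w, f w <= f v].

From HB Require Import structures.
From mathcomp Require Import all_boot all_order all_algebra.
From mathcomp Require Import all_classical all_reals all_analysis.
From mathcomp Require Import ring lra.
Set Implicit Arguments. Unset Strict Implicit. Unset Printing Implicit Defensive.
Import Order.TTheory GRing.Theory Num.Theory numFieldNormedType.Exports.
Local Open Scope classical_set_scope.
Local Open Scope ring_scope.

(* Comparing the maximiser v with the competitor 0 gives
   L(x + b, v) <= L(x + b, 0) + |p_kappa| |v|.  The minimiser b_kappa[x] of the
   Moreau envelope satisfies |b|^2 / (2 kappa^2) <= phi(x) - phi(x + b) <= K |b|
   for the Lipschitz constant K of phi, so |p_kappa| = |b| / kappa^2 <= 2K
   uniformly in kappa, and L(., 0) is bounded by periodicity and compactness.
   Superlinear growth of L then forbids |v| from being large. *)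

Lemma young_sqr (R : realFieldType) (a c e : R) :
  0 < e -> a * c <= a ^+ 2 / (2 * e) + e * c ^+ 2 / 2.
Proof.
move=> e0; rewrite -subr_ge0.
have -> : a ^+ 2 / (2 * e) + e * c ^+ 2 / 2 - a * c = (a - e * c) ^+ 2 / (2 * e).
  by field; rewrite gt_eqF.
by rewrite divr_ge0 ?sqr_ge0 // ltW // mulr_gt0.
Qed.

Section EuclideanNorm.
Variables (R : realType) (d : nat).
Implicit Types (a : R) (p v : 'rV[R]_d).

Lemma enorm_ge0 v : 0 <= enorm v.
Proof. exact: sqrtr_ge0. Qed.

Lemma enorm_sqr v : enorm v ^+ 2 = \sum_(i < d) v ord0 i ^+ 2.
Proof. by rewrite sqr_sqrtr // sumr_ge0 // => i _; exact: sqr_ge0. Qed.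

Lemma enorm0 : enorm (0 : 'rV[R]_d) = 0.
Proof. by rewrite /enorm big1 ?sqrtr0 // => i _; rewrite mxE expr0n. Qed.

Lemma enorm_eq0_coef v : enorm v = 0 -> forall i, v ord0 i = 0.
Proof.
move=> v0 i; have sum0 : \sum_(j < d) v ord0 j ^+ 2 = 0 by rewrite -enorm_sqr v0 expr0n.
have /eqP := psumr_eq0P (fun j _ => sqr_ge0 (v ord0 j)) sum0 (i := i) isT.
by rewrite sqrf_eq0 => /eqP.
Qed.

Lemma enormZ a v : enorm (a *: v) = `|a| * enorm v.
Proof.
rewrite /enorm -sqrtr_sqr -sqrtrM ?sqr_ge0 // mulr_sumr.
by congr Num.sqrt; apply: eq_bigr => i _; rewrite mxE exprMn.
Qed.

Lemma enormN v : enorm (- v) = enorm v.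
Proof. by rewrite -scaleN1r enormZ normrN1 mul1r. Qed.

Lemma enorm_p_kappa v a : enorm (p_kappa v a) = a ^- 2 * enorm v.
Proof. by rewrite enormZ enormN ger0_norm // invr_ge0 sqr_ge0. Qed.

Lemma dotp0 p : dotp p 0 = 0.
Proof. by rewrite /dotp big1 // => i _; rewrite mxE mulr0. Qed.

Lemma dotpNl p v : dotp (- p) v = - dotp p v.
Proof. by rewrite /dotp -sumrN; apply: eq_bigr => i _; rewrite mxE mulNr. Qed.

Lemma dotp_le_enorm p v : dotp p v <= enorm p * enorm v.
Proof.
have [s0|s0] := eqVneq (enorm p) 0.
  by rewrite s0 mul0r /dotp big1 // => i _; rewrite (enorm_eq0_coef s0) mul0r.
have [t0|t0] := eqVneq (enorm v) 0.
  by rewrite t0 mulr0 /dotp big1 // => i _; rewrite (enorm_eq0_coef t0) mulr0.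
have sp : 0 < enorm p by rewrite lt_def s0 enorm_ge0.
have tp : 0 < enorm v by rewrite lt_def t0 enorm_ge0.
(* expand 0 <= sum_i (|v| p_i - |p| v_i)^2 *)
have key : 2 * enorm p * enorm v * dotp p v <=
    enorm v ^+ 2 * (\sum_(i < d) p ord0 i ^+ 2) +
    enorm p ^+ 2 * (\sum_(i < d) v ord0 i ^+ 2).
  rewrite /dotp !mulr_sumr -big_split /=; apply: ler_sum => i _.
  have := sqr_ge0 (enorm v * p ord0 i - enorm p * v ord0 i); nra.
rewrite -!enorm_sqr in key.
move: key sp tp; move: (enorm p) (enorm v) (dotp p v) => s t z key sp tp.
have : 0 < s * t by exact: mulr_gt0.
nra.
Qed.

Lemma oppr_dotp_le_enorm p v : - dotp p v <= enorm p * enorm v.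
Proof. by rewrite -dotpNl -(enormN p) dotp_le_enorm. Qed.

End EuclideanNorm.

Lemma eucl_lipschitz_subr_le (R : realType) (d : nat) (f : 'rV[R]_d -> R) :
  eucl_lipschitz f ->
  exists2 K, 0 <= K & forall x v, f x - f (x + v) <= K * enorm v.
Proof.
move=> [K0 fK0]; exists (Num.max K0 0); first by rewrite le_max lexx orbT.
move=> x v; have := fK0 (x + v) x; rewrite addrAC subrr add0r ler_norml.
move=> /andP[fK _]; have : K0 * enorm v <= Num.max K0 0 * enorm v.
  by rewrite ler_wpM2r ?enorm_ge0 // le_max lexx.
lra.
Qed.

Section MoreauEnvelope.
Variables (R : realType) (d : nat) (phi : 'rV[R]_d -> R) (K kappa : R).
Hypothesis K_ge0 : 0 <= K.
Hypothesis phiK : forall x v, phi x - phi (x + v) <= K * enorm v.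
Hypothesis kappa_gt0 : 0 < kappa.

Lemma phi_kappa_le_phi x : phi_kappa phi kappa x <= phi x.
Proof.
apply: ge_inf.
  exists (phi x - kappa ^+ 2 * K ^+ 2 / 2) => _ [v _ <-].
  have := phiK x v; have := young_sqr (enorm v) K (exprn_gt0 2 kappa_gt0); lra.
by exists 0 => //; rewrite addr0 enorm0 expr0n /= mul0r addr0.
Qed.

Lemma Moreau_minimizer_enorm_le x b :
  phi (x + b) + enorm b ^+ 2 / (2 * kappa ^+ 2) = phi_kappa phi kappa x ->
  enorm b <= 2 * K * kappa ^+ 2.
Proof.
move=> bmin; have k2_gt0 : 0 < kappa ^+ 2 := exprn_gt0 2 kappa_gt0.
have : enorm b ^+ 2 / (2 * kappa ^+ 2) <= K * enorm b.
  by have := phiK x b; have := phi_kappa_le_phi x; lra.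
rewrite ler_pdivrMr ?mulr_gt0 //.
have := enorm_ge0 b; move: (enorm b) => s s_ge0 s_le.
have [->|s_neq0] := eqVneq s 0; first by rewrite !mulr_ge0 // ltW.
have s_gt0 : 0 < s by rewrite lt_def s_neq0.
by rewrite -(ler_pM2r s_gt0) -expr2; lra.
Qed.

End MoreauEnvelope.

Lemma Zd_translate_unit_cube (R : realType) (d : nat) (y : 'rV[R]_d) :
  exists k : 'rV[int]_d, forall i, 0 <= (y + zvec k) ord0 i <= 1.
Proof.
exists (\row_i (- Num.floor (y ord0 i))) => i.
rewrite !mxE mulrNz subr_ge0 floor_le /= lerBlDl; apply: ltW.
by have := floorD1_gt (y ord0 i); rewrite intrD addrC.
Qed.

Lemma Zd_periodic_continuous_ubounded (R : realType) (d : nat)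
    (f : 'rV[R]_d -> R) :
  Zd_periodic f -> continuous f -> exists B, forall y, f y <= B.
Proof.
move=> fper fcont.
pose cube := [set v : 'rV[R]_d | forall i, `[0, 1]%classic (v ord0 i)].
have cube_compact : compact cube :=
  @rV_compact R d (fun _ => `[0, 1]%classic) (fun _ => @segment_compact R 0 1).
have cube0 : cube !=set0 by exists 0 => i; rewrite /= mxE in_itv /= lexx ler01.
have [c _ fc_max] :=
  EVT_max_rV cube0 cube_compact (continuous_subspaceT fcont).
exists (f c) => y; have [k yk] := Zd_translate_unit_cube y.
by rewrite -(fper y k); apply: fc_max; rewrite inE => i /=; rewrite in_itv yk.
Qed.

Lemma continuous2_section_l (T U V : topologicalType) (g : T -> U -> V) (u : U) :
  continuous (fun tu : T * U => g tu.1 tu.2) -> continuous (g^~ u).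
Proof.
move=> gcont t.
have pair_cont : {for t, continuous (fun t' => (t', u))}.
  exact: cvg_pair (@cvg_id _ (nbhs t)) (cvg_cst u).
exact: continuous_comp pair_cont (gcont (t, u)).
Qed.

Lemma Argmax_enorm_le (R : realType) (d : nat) (l : 'rV[R]_d -> R)
    (p v : 'rV[R]_d) (c B r : R) :
  enorm p <= c -> l 0 <= B ->
  (forall w, r <= enorm w -> (c + 1) * enorm w <= l w) ->
  Argmax (fun w => - dotp p w - l w) v -> enorm v <= Num.max r B.
Proof.
move=> pc l0B l_super v_max.
have := v_max 0; rewrite dotp0 oppr0 sub0r => l_le.
have : - dotp p v <= c * enorm v.
  by rewrite (le_trans (oppr_dotp_le_enorm p v)) // ler_wpM2r ?enorm_ge0.
rewrite le_max; have [/l_super|] := lerP r (enorm v); last by move=> /ltW ->.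
by rewrite mulrDl mul1r; lra.
Qed.

Theorem proposition5 (R : realType) (d : nat)
  (L : 'rV[R]_d -> 'rV[R]_d -> R) (phi : 'rV[R]_d -> R)
  (b vv : R -> 'rV[R]_d -> 'rV[R]_d) :
  (* L : T^d x R^d -> R, continuous *)
  (forall v, Zd_periodic (fun x => L x v)) ->
  continuous (fun xv : 'rV[R]_d * 'rV[R]_d => L xv.1 xv.2) ->
  (* lim_{|v| -> oo} inf_x L(x,v)/|v| = +oo *)
  (forall M : R, exists r : R, forall v, r <= enorm v ->
      forall x, M * enorm v <= L x v) ->
  (* phi : T^d -> R Lipschitz *)
  Zd_periodic phi -> eucl_lipschitz phi ->
  (* b_kappa[x] : a chosen minimizer realizing phi_kappa(x) *)
  (forall kappa, 0 < kappa -> Zd_periodic (b kappa)) ->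
  (forall kappa x, 0 < kappa ->
      phi (x + b kappa x) + (enorm (b kappa x)) ^+ 2 / (2 * kappa ^+ 2)
      = phi_kappa phi kappa x) ->
  (* v_kappa[x] in Argmax_v [ - p_kappa[x] v - L(x + b_kappa[x], v) ] *)
  (forall kappa, 0 < kappa -> Zd_periodic (vv kappa)) ->
  (forall kappa x, 0 < kappa ->
      Argmax (fun v => - dotp (p_kappa (b kappa x) kappa) v
                       - L (x + b kappa x) v) (vv kappa x)) ->
  exists C3 : R, forall kappa x, 0 < kappa -> enorm (vv kappa x) <= C3.
Proof.
move=> L_per L_cont L_super _ phi_lip _ b_min _ vv_max.
have [K K_ge0 phiK] := eucl_lipschitz_subr_le phi_lip.
have [B L0B] := Zd_periodic_continuous_ubounded (L_per 0)
  (@continuous2_section_l _ _ _ L 0 L_cont).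
have [r L_r] := L_super (2 * K + 1).
exists (Num.max r B) => kappa x kappa_gt0.
apply: (Argmax_enorm_le (c := 2 * K)) (vv_max _ _ kappa_gt0).
- rewrite enorm_p_kappa ler_pdivrMl ?exprn_gt0 // mulrC.
  exact: Moreau_minimizer_enorm_le (b_min _ _ kappa_gt0).
- exact: L0B.
- by move=> w /L_r.
Qed.
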